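(* Let $m\ge1$ and $x_{i,j}\in[-1,1]$ for $i\in[m]$, $j\in[m+1]$. Then for any $a\in\mathbb{R}^m$ there exists a subset $S\subseteq[m+1]$ with $|S|\le m$ such that \[\Big|\sum_{i=1}^m a_i\prod_{j\in S}x_{i,j}\Big|\ge\frac{1}{2^m-1}\Big|\sum_{i=1}^m a_i\prod_{j=1}^{m+1}x_{i,j}\Big|.\]
   Context: An empty product equals $1$. *)

From mathcomp Require Import all_boot all_order all_algebra.
From mathcomp Require Import reals.

From mathcomp Require Import all_boot all_order all_algebra.
From mathcomp Require Import reals.
Import Order.TTheory GRing.Theory Num.Theory.
Local Open Scope ring_scope.

(* Put [lam j := x_(j,j)] for [j <= m] and [lam (m+1) := 0]. Every product
   [prod_j (x_(i,j) - lam j)] has the vanishing factor [j = i], and expanding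
   it over the subsets [S] of [[m+1]] gives [sum_S c_S f(S) = 0], where
   [f(S) = sum_i a_i prod_(j in S) x_(i,j)] and [c_S = prod_(j notin S) (- lam j)].
   Since [c_[m+1] = 1], [f([m+1])] is a combination of the [f(S)] with [S]
   proper, with total weight [prod_j (1 + |lam j|) - 1 <= 2^m - 1]; the proper
   [S] maximizing [|f(S)|] therefore satisfies the inequality. *)

Lemma prod_if_mem (R : comPzSemiRingType) (I : finType) (S : {set I})
    (u v : I -> R) :
  \prod_j (if j \in S then u j else v j) =
  (\prod_(j in S) u j) * \prod_(j in ~: S) v j.
Proof.
rewrite (bigID (mem S)) /=; congr (_ * _); first by apply: eq_bigr => j ->.
rewrite [RHS](eq_bigl (fun j => j \notin S)) => [|j]; last by rewrite in_setC.
by apply: eq_bigr => j /negbTE ->.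
Qed.

Lemma prod_add_expand (R : comPzSemiRingType) (I : finType) (u v : I -> R) :
  \prod_j (u j + v j) =
  \sum_(S : {set I}) (\prod_(j in S) u j) * \prod_(j in ~: S) v j.
Proof. by rewrite bigA_distr; apply: eq_bigr => S _; rewrite prod_if_mem. Qed.

Lemma sum_prod_setC_norm (R : numDomainType) (I : finType) (c : I -> R) :
  \sum_(S : {set I}) `|\prod_(j in ~: S) c j| = \prod_j (1 + `|c j|).
Proof.
rewrite prod_add_expand; apply: eq_bigr => S _.
by rewrite big1_eq mul1r normr_prod.
Qed.

Lemma sum_coef_setC_prod_eq0 (R : comPzRingType) (I J : finType)
    (a : I -> R) (x : I -> J -> R) (lam : J -> R) :
    (forall i, exists j, x i j = lam j) ->
  \sum_(S : {set J}) (\prod_(j in ~: S) - lam j) *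
     \sum_i a i * \prod_(j in S) x i j = 0.
Proof.
move=> x_lam; transitivity (\sum_i a i * \prod_j (x i j - lam j)).
  under eq_bigr => S _ do rewrite mulr_sumr.
  rewrite exchange_big; apply: eq_bigr => i _ /=.
  rewrite prod_add_expand mulr_sumr; apply: eq_bigr => S _.
  by rewrite mulrCA [X in _ * X]mulrC.
apply: big1 => i _; have [j xij] := x_lam i.
by rewrite (bigD1 j) //= xij subrr mul0r mulr0.
Qed.

Lemma exists_norm_le_coef_max (R : realDomainType) (T : finType)
    (c f : T -> R) (t0 t1 : T) :
    t1 != t0 -> c t0 = 1 -> \sum_t c t * f t = 0 ->
  exists2 t, t != t0 & `|f t0| <= (\sum_t `|c t| - 1) * `|f t|.
Proof.
move=> t10 ct0 sum_cf0.
have [t t_neq_t0 t_max] :=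
  @arg_maxP _ _ _ t1 (fun t => t != t0) (fun t => `|f t|) t10.
exists t => //.
have ft0 : f t0 = - \sum_(s | s != t0) c s * f s.
  by apply/eqP; move/eqP: sum_cf0; rewrite (bigD1 t0) //= ct0 mul1r addr_eq0.
rewrite (bigD1 t0) //= ct0 normr1 addrC addrK ft0 normrN mulr_suml.
apply: le_trans (ler_norm_sum _ _ _) _.
by apply: ler_sum => s s_neq_t0; rewrite normrM ler_wpM2l //; apply: t_max.
Qed.

Lemma prod_1_add_norm_le (R : numDomainType) (I : finType) (c : I -> R)
    (j0 : I) :
    c j0 = 0 -> (forall j, `|c j| <= 1) ->
  \prod_j (1 + `|c j|) <= 2 ^+ #|I|.-1.
Proof.
move=> cj0 c_le1; rewrite (bigD1 j0) //= cj0 normr0 addr0 mul1r.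
rewrite -(cardC1 j0) -prodr_const.
by apply: ler_prod => j _; rewrite addr_ge0 //= -[2]/(1 + 1) lerD2l c_le1.
Qed.

Theorem lemma8 (R : realType) (m : nat) (hm : (1 <= m)%N)
  (x : 'I_m -> 'I_m.+1 -> R)
  (hx : forall i j, -1 <= x i j <= 1)
  (a : 'I_m -> R) :
  exists S : {set 'I_m.+1}, (#|S| <= m)%N /\ 
    (`| \sum_(i < m) a i * \prod_(j in S) x i j |
      >= (2 ^+ m - 1)^-1 * `| \sum_(i < m) a i * \prod_(j < m.+1) x i j |).
Proof.
pose lam j := if unlift ord_max j is Some i then x i j else 0.
pose f (S : {set 'I_m.+1}) := \sum_(i < m) a i * \prod_(j in S) x i j.
pose c (S : {set 'I_m.+1}) := \prod_(j in ~: S) - lam j.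
have x_lam i : exists j, x i j = lam j.
  by exists (lift ord_max i); rewrite /lam liftK.
have set0_neqT : set0 != [set: 'I_m.+1].
  by apply/eqP => /setP/(_ ord0); rewrite in_set0 in_setT.
have cT : c setT = 1 by rewrite /c setCT big_set0.
have [S S_neqT fT_le] := @exists_norm_le_coef_max _ _ c f _ _ set0_neqT cT
  (@sum_coef_setC_prod_eq0 _ _ _ a _ _ x_lam).
exists S; split.
  by rewrite -ltnS -[X in (_ < X)%N]card_ord -cardsT proper_card ?properT.
have lam_le1 j : `|- lam j| <= 1.
  by rewrite normrN /lam; case: unlift => [i|]; rewrite ?normr0 ?ler_norml ?hx.
have weight_le : \sum_S `|c S| - 1 <= 2 ^+ m - 1.
  have lam_max : - lam ord_max = 0 by rewrite /lam unlift_none oppr0.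
  have := @prod_1_add_norm_le _ _ (fun j => - lam j) _ lam_max lam_le1.
  by rewrite lerD2r sum_prod_setC_norm card_ord.
have weight_gt0 : 0 < (2 : R) ^+ m - 1.
  by rewrite subr_gt0 exprn_egt1 ?ltr1n // -lt0n.
have -> : \sum_(i < m) a i * \prod_(j < m.+1) x i j = f setT.
  by apply: eq_bigr => i _; apply/congr1/eq_bigl => j; rewrite in_setT.
rewrite ler_pdivrMl //; apply: le_trans fT_le _.
by rewrite ler_wpM2r.
Qed.
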